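(* Let $p>5$ be a prime and consider the equation over $\mathbb{F}_p$ \[ x_1^2+x_2^2+x_3^2 - 3x_1x_2 = 0 \] (the case $a_1=a_2=0$, $a_3=-3$, $s=3+a_1+a_2+a_3=0$), with the maps $m_1:(x_1,x_2,x_3)\mapsto(-x_1+3x_2,x_2,x_3)$ and $m_2:(x_1,x_2,x_3)\mapsto(x_1,-x_2+3x_1,x_3)$. Let $\lambda = \frac{7+3\sqrt5}{2}\in\mathbb{F}_{p^2}$ (for either choice of $\sqrt5$) and let $\operatorname{ord}(\lambda)$ be its multiplicative order in $\mathbb{F}_{p^2}^\times$. Then: \begin{enumerate} \item the number of orbits of the group generated by $m_1,m_2$ acting on the set of solutions of the form $(x_1,x_2,1)$ is \[ \frac12\cdot\frac{p-1}{\operatorname{ord}(\lambda)} + 1 \ \text{ if } \sqrt5\in\mathbb{F}_p,\qquad \frac12\cdot\frac{p+1}{\operatorname{ord}(\lambda)} \ \text{ if } \sqrt5\notin\mathbb{F}_p; \] \item the number of orbits of the group generated by $m_1,m_2$ acting on the set of solutions of the form $(x_1,x_2,0)\neq(0,0,0)$ is $\frac{p-1}{\operatorname{ord}(\lambda)}$ if $\sqrt5\in\mathbb{F}_p$, and $0$ if $\sqrt5\notin\mathbb{F}_p$. \end{enumerate}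
   Context: $\lambda$ is an eigenvalue of the matrix of $m_1m_2$ acting on $(x_1,x_2)$, a root of $\lambda^2-7\lambda+1=0$; $\operatorname{ord}(\lambda)$ divides $\frac{p-1}{2}$ if $\lambda\in\mathbb{F}_p$ and $\frac{p+1}{2}$ otherwise. *)

From HB Require Import structures.
From mathcomp Require Import all_boot all_order all_algebra all_field.
Set Implicit Arguments. Unset Strict Implicit. Unset Printing Implicit Defensive.
Import GRing.Theory.
Local Open Scope ring_scope.

(* Points (x1, x2, x3) of F_p^3, encoded as ((x1, x2), x3). *)
Definition trip (p : nat) := ('F_p * 'F_p * 'F_p)%type.

Definition eqn (p : nat) (x : trip p) : 'F_p :=
  x.1.1 ^+ 2 + x.1.2 ^+ 2 + x.2 ^+ 2 - 3%:R * x.1.1 * x.1.2.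

Definition m1 (p : nat) (x : trip p) : trip p :=
  (- x.1.1 + 3%:R * x.1.2, x.1.2, x.2).
Definition m2 (p : nat) (x : trip p) : trip p :=
  (x.1.1, - x.1.2 + 3%:R * x.1.1, x.2).

Definition step (p : nat) : rel (trip p) :=
  fun x y => (y == m1 x) || (y == m2 x).

(* orbit of x under the group <m1, m2>; since m1, m2 are involutions,
   the group orbit is the set of points reachable by iterating m1, m2 *)
Definition orbit_of (p : nat) (x : trip p) : {set trip p} :=
  [set y | connect (@step p) x y].

Definition orbits (p : nat) (A : {set trip p}) : {set {set trip p}} :=
  [set orbit_of x | x in A].

Definition sols1 (p : nat) : {set trip p} :=
  [set x : trip p | (eqn x == 0) && (x.2 == 1)].

Definition sols0 (p : nat) : {set trip p} :=
  [set x : trip p | [&& eqn x == 0, x.2 == 0 & x != (0, 0, 0)]].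

(* Write M = m1 \o m2.  On (x1, x2) it acts by a matrix A of trace 7 and determinant 1, so
   A^k = u_k A - u_(k-1) for the Lucas sequence u_(k+2) = 7 u_(k+1) - u_k, and likewise
   lambda^k = u_k lambda - u_(k-1).  By Cassini's identity and 45 != 0 (the discriminant),
   A^k fixes a nonzero vector, resp. lambda^k = 1, exactly when u_k = 0 and u_(k-1) = -1.
   This is a congruence between integers modulo p, the common characteristic of F_p and of
   the field containing lambda, so M has exact order ord(lambda) on every point with
   (x1, x2) != 0.  Hence <m1, m2> acts on each orbit as a dihedral group: an orbit is either
   one M-cycle, containing exactly two points fixed by m1 or m2, or two disjoint M-cycles
   containing none.  Weighting a point by 2 + ord(lambda) * #{reflections fixing it} gives
   every orbit weight 4 ord(lambda).  The solutions and the fixed points of m1 (and of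
   m2 = swap m1 swap) are counted through (2 x1 - 3 x2)^2 - 5 x2^2 = 4 (x1^2 - 3 x1 x2 + x2^2)
   and the fibres of the norm form u^2 - 5 v^2 on F_p^2. *)

From HB Require Import structures.
From mathcomp Require Import all_boot all_order all_algebra all_field.
From mathcomp Require Import ring zify.

Set Implicit Arguments.
Unset Strict Implicit.
Unset Printing Implicit Defensive.

Import GRing.Theory Num.Theory.

Lemma sum_nat_pairs (f : nat -> nat) n :
  \sum_(i < n) (f i.*2 + f i.*2.+1) = \sum_(m < n.*2) f m.
Proof.
elim: n => [|n IHn]; first by rewrite !big_ord0.
by rewrite big_ord_recr /= IHn doubleS !big_ord_recr /= addnA.
Qed.

Lemma sum_eqn_mod n j : 0 < n -> \sum_(m < n) (j == m %[mod n]) = 1.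
Proof.
move=> n_gt0; rewrite (bigD1 (Ordinal (ltn_pmod j n_gt0))) //= modn_mod eqxx.
rewrite big1 // => m /eqP m_neq; rewrite (modn_small (ltn_ord m)).
by case: eqP => // jm; case: m_neq; apply: val_inj.
Qed.

Lemma sum_eqn_mod_double n j : 0 < n ->
  \sum_(i < n) ((j == i.*2 %[mod n]) + (j == i.*2.+1 %[mod n])) = 2.
Proof.
move=> n_gt0; rewrite (sum_nat_pairs (fun m => j == m %[mod n] : nat)) -addnn.
rewrite big_split_ord /= sum_eqn_mod //.
by under eq_bigr do rewrite modnDl; rewrite sum_eqn_mod.
Qed.

Lemma homo_setD1 (T : finType) (f : T -> T) (A : {set T}) (a : T) :
  involutive f -> f a = a -> {homo f : x / x \in A} -> {homo f : x / x \in A :\ a}.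
Proof. by move=> fK fa fA x; rewrite !inE (inv_eq fK) fa => /andP[-> /fA]. Qed.

Section DihedralOrbits.
Variables (T : finType) (a b : T -> T).
Hypotheses (aK : involutive a) (bK : involutive b).

Definition dstep : rel T := fun x y => (y == a x) || (y == b x).

Local Notation r := (a \o b).

Lemma dstep_sym : symmetric dstep.
Proof. by move=> x y; rewrite /dstep ![y == _]eq_sym (inv_eq aK) (inv_eq bK). Qed.

Lemma iter_a_iter k x : iter k r (a (iter k r x)) = a x.
Proof. by elim: k => // k IHk; rewrite iterSr iterS /= aK bK. Qed.

Variables (S : {set T}) (n : nat).
Hypotheses (aS : {homo a : x / x \in S}) (bS : {homo b : x / x \in S}).
Hypotheses (n_gt0 : 0 < n) (period : {in S, forall x k, (iter k r x == x) = (n %| k)}).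

Let iter_memS k : {homo iter k r : x / x \in S}.
Proof. by apply: iter_in => x xS; rewrite /= aS ?bS. Qed.

Lemma iter_period x : x \in S -> iter n r x = x.
Proof. by move=> xS; apply/eqP; rewrite period ?dvdnn. Qed.

Lemma iter_modn x k : x \in S -> iter k r x = iter (k %% n) r x.
Proof.
move=> xS; rewrite {1}(divn_eq k n) iterD.
elim: (k %/ n) => [//|q IHq].
by rewrite mulSn iterD IHq iter_period ?iter_memS.
Qed.

Lemma iter_eq_mod x i j : x \in S -> (iter i r x == iter j r x) = (i == j %[mod n]).
Proof.
move=> xS; wlog le_ij : i j / i <= j.
  move=> wlog_le; case: (leqP i j) => [/wlog_le //|/ltnW/wlog_le].
  by rewrite eq_sym => ->; apply: eq_sym.
by rewrite [RHS]eq_sym eqn_mod_dvd // -(period (iter_memS i xS)) -iterD subnK.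
Qed.

Lemma a_iter k x : k <= n -> x \in S -> a (iter k r x) = iter (n - k) r (a x).
Proof.
move=> le_kn xS; rewrite -[in RHS](iter_a_iter k x) -iterD subnK //.
by rewrite iter_period ?aS ?iter_memS.
Qed.

Definition rcycle x : {set T} := [set iter i r x | i : 'I_n].

Lemma rcycle_iter x k : x \in S -> iter k r x \in rcycle x.
Proof. by move=> xS; rewrite iter_modn //; apply: imset_f (Ordinal (ltn_pmod k n_gt0)) _. Qed.

Lemma card_rcycle x : x \in S -> #|rcycle x| = n.
Proof.
move=> xS; rewrite card_imset ?card_ord // => i j /eqP.
by rewrite iter_eq_mod // !modn_small // => /eqP/val_inj.
Qed.

Lemma rcycleS x y : x \in S -> y \in rcycle x -> y \in S.
Proof. by move=> xS /imsetP[i _ ->]; rewrite iter_memS. Qed.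

Lemma rcycle_sym x y : x \in S -> y \in rcycle x -> x \in rcycle y.
Proof.
move=> xS /imsetP[i _ ->].
have e : x = iter (n - i) r (iter i r x) by rewrite -iterD subnK ?iter_period // ltnW.
by rewrite {1}e rcycle_iter ?iter_memS.
Qed.

Lemma rcycle_trans x y z : x \in S -> y \in rcycle x -> z \in rcycle y -> z \in rcycle x.
Proof. by move=> xS /imsetP[i _ ->] /imsetP[j _ ->]; rewrite -iterD rcycle_iter. Qed.

Lemma rcycle_eq x y : x \in S -> y \in rcycle x -> rcycle y = rcycle x.
Proof.
move=> xS yx; apply/setP => z; apply/idP/idP; first exact: rcycle_trans.
exact: rcycle_trans (rcycleS xS yx) (rcycle_sym xS yx).
Qed.

Lemma a_rcycle x y : x \in S -> y \in rcycle x -> a y \in rcycle (a x).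
Proof. by move=> xS /imsetP[i _ ->]; rewrite a_iter ?rcycle_iter ?aS // ltnW. Qed.

Lemma b_rcycle x y : x \in S -> y \in rcycle x -> b y \in rcycle (a x).
Proof.
move=> xS yx; rewrite -[b y]aK; apply: (a_rcycle xS (rcycle_trans xS yx _)).
exact: (rcycle_iter 1 (rcycleS xS yx)).
Qed.

Lemma rcycle_meet x y z :
  x \in S -> y \in S -> z \in rcycle x -> z \in rcycle y -> y \in rcycle x.
Proof.
move=> xS yS zx zy; rewrite -(rcycle_eq xS zx) (rcycle_eq yS zy).
exact: (rcycle_iter 0 yS).
Qed.

Lemma connect_dstep x y : x \in S ->
  connect dstep x y = (y \in rcycle x :|: rcycle (a x)).
Proof.
move=> xS; set O := rcycle x :|: rcycle (a x).
have O_step u v : dstep u v -> u \in O -> v \in O.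
  case/orP=> /eqP-> /setUP[] uO; apply/setUP.
  - by right; apply: a_rcycle uO.
  - by left; rewrite -[x]aK; apply: a_rcycle (aS xS) uO.
  - by right; apply: b_rcycle uO.
  - by left; rewrite -[x]aK; apply: b_rcycle (aS xS) uO.
have O_closed : closed dstep O.
  by move=> u v uv; apply/idP/idP; apply: O_step; rewrite // dstep_sym.
have r_connect z : connect dstep z (r z).
  have zb : dstep z (b z) by rewrite /dstep eqxx orbT.
  have ba : dstep (b z) (a (b z)) by rewrite /dstep eqxx.
  exact: connect_trans (connect1 zb) (connect1 ba).
have connect_iter u k : connect dstep u (iter k r u).
  by elim: k => // k IHk; apply: connect_trans IHk (r_connect _).
apply/idP/idP => [/(closed_connect O_closed) <-|/setUP[] /imsetP[i _ ->] //].
  by apply/setUP; left; apply: (rcycle_iter 0 xS).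
apply: connect_trans (connect1 _) (connect_iter _ _).
by rewrite /dstep eqxx.
Qed.

Lemma a_mem_rcycle x y : x \in S -> y \in rcycle x ->
  (a y \in rcycle y) = (a x \in rcycle x).
Proof.
move=> xS yx; have ayax := a_rcycle xS yx; rewrite (rcycle_eq xS yx).
apply/idP/idP => [ayx|axx]; last by rewrite -(rcycle_eq xS axx).
exact: rcycle_meet (aS xS) ayx ayax.
Qed.

Lemma fixed_a_rcycle y : y \in S -> (a y == y) || (b y == y) -> a y \in rcycle y.
Proof.
move=> yS /orP[] /eqP fixy; first by rewrite fixy (rcycle_iter 0 yS).
by rewrite -{1}fixy (rcycle_iter 1 yS).
Qed.

(* Every orbit gets weight [4 * n]: it is either one [r]-cycle on which [a] and [b] together fix
   exactly two points (if [a x = r^j x], those [r^i x] with [j = 2i] or [j = 2i + 1] mod [n]),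
   or two disjoint [r]-cycles on which they fix nothing. *)
Let weight y := 2 + n * ((a y == y) + (b y == y)).

Lemma sum_weight_orbit x : x \in S -> \sum_(y in rcycle x :|: rcycle (a x)) weight y = 4 * n.
Proof.
move=> xS; have [axx|axNx] := boolP (a x \in rcycle x).
  rewrite (rcycle_eq xS axx) setUid big_imset /=; last first.
    by move=> i j _ _ /eqP; rewrite iter_eq_mod // !modn_small // => /eqP/val_inj.
  case/imsetP: axx => j _ axj.
  have reflect_mod k m : k <= n -> (n - k + j == m %[mod n]) = (j == k + m %[mod n]).
    by move=> le_kn; rewrite -(eqn_modDl k) addnA subnKC // modnDl.
  rewrite big_split sum_nat_const card_ord -big_distrr /=.
  rewrite (eq_bigr (fun i : 'I_n => (j == i.*2 %[mod n]) + (j == i.*2.+1 %[mod n]))).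
    by rewrite sum_eqn_mod_double //; lia.
  move=> i _; congr (_ + _).
    by rewrite a_iter 1?ltnW // axj -iterD iter_eq_mod // reflect_mod 1?ltnW // addnn.
  have -> : b (iter i r x) = a (iter i.+1 r x) by rewrite /= aK.
  by rewrite a_iter // axj -iterD iter_eq_mod // reflect_mod // addSn addnn.
have disj : rcycle x :&: rcycle (a x) = set0.
  apply/setP => z; rewrite !inE; apply/negP => /andP[zx zax].
  by case/negP: axNx; apply: rcycle_meet (aS xS) zx zax.
have weight2 y : y \in rcycle x :|: rcycle (a x) -> weight y = 2.
  move=> yO; rewrite /weight; case: (boolP ((a y == y) || (b y == y))); last first.
    by rewrite negb_or => /andP[/negPf-> /negPf->]; rewrite muln0.
  move=> fixy; case/setUP: yO => yO.
    by rewrite -(a_mem_rcycle xS yO) (fixed_a_rcycle (rcycleS xS yO) fixy) in axNx.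
  have := fixed_a_rcycle (rcycleS (aS xS) yO) fixy.
  by rewrite (a_mem_rcycle (aS xS) yO) aK => /(rcycle_sym (aS xS)); rewrite (negPf axNx).
rewrite (eq_bigr _ weight2) sum_nat_const cardsU disj cards0 subn0.
by rewrite !card_rcycle ?aS //; lia.
Qed.

Lemma card_dihedral_orbits :
  #|[set [set y | connect dstep x y] | x in S]| * (4 * n) =
  2 * #|S| + n * (#|[set x in S | a x == x]| + #|[set x in S | b x == x]|).
Proof.
have orbitE x : x \in S -> [set y in S | connect dstep x y] = rcycle x :|: rcycle (a x).
  move=> xS; apply/setP => y; rewrite [in LHS]inE connect_dstep //.
  by rewrite andb_idl // => /setUP[] yO; [apply: rcycleS yO | apply: rcycleS (aS xS) yO].
have -> : [set [set y | connect dstep x y] | x in S] = equivalence_partition (connect dstep) S.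
  apply: eq_in_imset => x xS; rewrite /= orbitE //; apply/setP => y.
  by rewrite inE connect_dstep.
have eqS : {in S & &, equivalence_rel (connect dstep)}.
  move=> x y z _ _ _; split=> [|xy]; first exact: connect0.
  exact: (same_connect (sym_connect_sym dstep_sym) xy z).
rewrite -sum_nat_const.
transitivity (\sum_(x in S) weight x).
  rewrite (set_partition_big _ (equivalence_partitionP eqS)).
  by apply: eq_bigr => _ /imsetP[x xS ->]; rewrite orbitE // sum_weight_orbit.
rewrite big_split sum_nat_const -big_distrr big_split /= -!big_mkcondr !sum1dep_card.
by rewrite mulnC.
Qed.

End DihedralOrbits.

Local Open Scope ring_scope.

Section NormForm.
Variables (F : finFieldType) (d : F).
Hypotheses (two_neq0 : (2%:R : F) != 0) (d_neq0 : d != 0).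

Lemma card_sqr_eq (t : F) : #|[set u : F | u ^+ 2 == t ^+ 2]| = if t == 0 then 1%N else 2%N.
Proof.
have -> : [set u : F | u ^+ 2 == t ^+ 2] = [set t; - t].
  by apply/setP => u; rewrite !inE eqf_sqr.
rewrite cards2; have [->|t_neq0] := eqVneq t 0; first by rewrite oppr0 eqxx.
by rewrite -addr_eq0 -mulr2n -mulr_natl mulf_eq0 (negPf two_neq0) (negPf t_neq0).
Qed.

Definition squares : {set F} := [set u ^+ 2 | u : F].

Lemma card_squares : (#|squares|.*2 = #|F|.+1)%N.
Proof.
have card_fiber j : j \in squares -> #|[set u | u ^+ 2 == j]| = if j == 0 then 1%N else 2%N.
  by case/imsetP=> t _ ->; rewrite card_sqr_eq expf_eq0.
have zero_sq : 0 \in squares by apply/imsetP; exists 0; rewrite ?expr0n.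
have : (#|F| = \sum_(j in squares) if j == 0%R then 1 else 2)%N.
  rewrite -sum1_card (partition_big_imset (fun u : F => u ^+ 2)).
  apply: eq_big => [j|j /card_fiber <-]; last by rewrite -sum1dep_card.
  by apply/imsetP/imsetP => -[u _ ->]; exists u.
rewrite (big_setD1 0) //= eqxx (eq_bigr (fun _ => 2%N)) => [|j /setD1P[/negPf->]] //.
rewrite sum_nat_const (cardsD1 0 squares) zero_sq.
(* [set] identifies convertible copies of the cardinal that [lia] would see as distinct atoms. *)
by set k := #|squares :\ 0|; lia.
Qed.

(* A pair [z] stands for [z.1 + z.2 * sqrt d], so [normf] is the norm of [F(sqrt d)]. *)
Definition normf (z : F * F) : F := z.1 ^+ 2 - d * z.2 ^+ 2.
Definition normfib (c : F) : {set F * F} := [set z | normf z == c].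
Definition qmul (z w : F * F) : F * F := (z.1 * w.1 + d * z.2 * w.2, z.1 * w.2 + z.2 * w.1).

Lemma normfM z w : normf (qmul z w) = normf z * normf w.
Proof. by rewrite /normf /qmul /=; ring. Qed.

Lemma normf_surj c : exists z, normf z = c.
Proof.
(* Pigeonhole: [squares] and [c + d * squares] both have [(#|F| + 1) / 2] elements. *)
pose B := [set c + d * y | y in squares].
have cardB : #|B| = #|squares| by apply: card_imset => y1 y2 /addrI /(mulfI d_neq0).
have : (0 < #|squares :&: B|)%N.
  have := cardsUI squares B; have := max_card (squares :|: B).
  rewrite cardB; have := card_squares; set k := #|squares|; set m := #|squares :|: B|.
  by set q := #|F|; lia.
case/card_gt0P => _ /setIP[/imsetP[u _ ->] /imsetP[_ /imsetP[v _ ->] uv]].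
by exists (u, v); rewrite /normf uv addrK.
Qed.

Lemma card_normfib_unit c : c != 0 -> #|normfib c| = #|normfib 1|.
Proof.
have [z <-] := normf_surj c; rewrite {1}/normf => Nz_neq0.
pose zi := (z.1 / normf z, - z.2 / normf z).
have qmulK : cancel (qmul z) (qmul zi).
  by case=> w1 w2; rewrite /qmul /zi /normf /=; congr (_, _); field.
have qmulKV : cancel (qmul zi) (qmul z).
  by case=> w1 w2; rewrite /qmul /zi /normf /=; congr (_, _); field.
have Nzi : normf zi * normf z = 1 by rewrite /zi /normf /=; field.
rewrite -(card_imset (normfib 1) (can_inj qmulK)); apply: eq_card => w.
rewrite [in LHS]inE; apply/eqP/imsetP => [Nw|[v + ->]].
  by exists (qmul zi w); rewrite ?qmulKV // inE normfM Nw Nzi.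
by rewrite inE normfM => /eqP->; rewrite mulr1.
Qed.

Lemma card_normfib_sum : (#|normfib 0%R| + (#|F| - 1) * #|normfib 1%R| = #|F| * #|F|)%N.
Proof.
have -> : (#|F| * #|F| = \sum_(c : F) #|normfib c|)%N.
  rewrite -card_prod -cardsT -sum1_card (partition_big normf predT) //=.
  by apply: eq_bigr => c _; rewrite -sum1_card; apply: eq_bigl => z; rewrite !inE.
rewrite (bigD1 0) //= (eq_bigr (fun _ => #|normfib 1|)) => [|c /card_normfib_unit //].
rewrite sum_nat_const; congr (_ + _ * _)%N.
by rewrite subn1 -(cardC1 (0 : F)); apply: eq_card => c; rewrite !inE.
Qed.

Lemma card_normfib0_square s : s ^+ 2 = d -> #|normfib 0| = (2 * #|F| - 1)%N.
Proof.
move=> sd; have s_neq0 : s != 0 by apply: contraNneq d_neq0 => s0; rewrite -sd s0 expr0n.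
pose A := [set (s * v, v) | v : F]; pose B := [set (- (s * v), v) | v : F].
have memA u v : ((u, v) \in A) = (u == s * v).
  by apply/imsetP/eqP => [[w _ [-> ->]] | ->] //; exists v.
have memB u v : ((u, v) \in B) = (u == - (s * v)).
  by apply/imsetP/eqP => [[w _ [-> ->]] | ->] //; exists v.
have AB : normfib 0 = A :|: B.
  apply/setP => -[u v]; rewrite in_setU memA memB inE /normf /= -eqf_sqr.
  by rewrite exprMn sd subr_eq0.
have AIB : A :&: B = [set (0, 0)].
  apply/setP => -[u v]; rewrite in_setI memA memB inE.
  apply/andP/eqP => [[/eqP-> /eqP sv]|[-> ->]]; last by rewrite mulr0 oppr0 eqxx.
  have /eqP : 2%:R * (s * v) = 0 by rewrite mulr2n mulrDl mul1r {1}sv addNr.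
  by rewrite !mulf_eq0 (negPf two_neq0) (negPf s_neq0) /= => /eqP->; rewrite mulr0.
have cardA : #|A| = #|F| by rewrite card_imset // => v w [].
have cardB : #|B| = #|F| by rewrite card_imset // => v w [].
have := cardsUI A B; rewrite AIB cards1 cardA cardB -AB.
by set q := #|F|; set N := #|normfib 0|; lia.
Qed.

Lemma card_normfib0_nonsquare : ~ (exists s, s ^+ 2 = d) -> #|normfib 0| = 1%N.
Proof.
move=> d_nonsq; suff -> : normfib 0 = [set (0, 0)] by rewrite cards1.
apply/setP => -[u v]; rewrite !inE /normf /=; apply/eqP/eqP => [|[-> ->]]; last first.
  by rewrite expr0n mulr0 subr0.
move/eqP; rewrite subr_eq0 => /eqP uv.
have v0 : v = 0.
  apply/eqP; apply: contraT => v_neq0; case: d_nonsq; exists (u / v).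
  by rewrite expr_div_n uv mulfK // expf_neq0.
by move: uv; rewrite v0 expr0n mulr0 => /eqP; rewrite expf_eq0 => /eqP->.
Qed.

Lemma card_normfib1_square s : s ^+ 2 = d -> #|normfib 1| = (#|F| - 1)%N.
Proof.
move=> sd; have := card_normfib_sum; rewrite (card_normfib0_square sd).
by have := card_finNzRing_gt1 F; set q := #|F|; nia.
Qed.

Lemma card_normfib1_nonsquare : ~ (exists s, s ^+ 2 = d) -> #|normfib 1| = #|F|.+1.
Proof.
move=> d_nonsq; have := card_normfib_sum; rewrite card_normfib0_nonsquare //.
by have := card_finNzRing_gt1 F; set q := #|F|; nia.
Qed.

Lemma card_sqr_inv_square s : s ^+ 2 = d -> #|[set t : F | d * t ^+ 2 == 1]| = 2%N.
Proof.
move=> sd; have s_neq0 : s != 0 by apply: contraNneq d_neq0 => s0; rewrite -sd s0 expr0n.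
have s2_neq0 := expf_neq0 2 s_neq0.
have -> : [set t : F | d * t ^+ 2 == 1] = [set t | t ^+ 2 == s^-1 ^+ 2].
  apply/setP => t; rewrite !inE -sd exprVn; apply/eqP/eqP => [dt|->]; last exact: mulfV.
  by rewrite -[t ^+ 2](mulKf s2_neq0) dt mulr1.
by rewrite card_sqr_eq invr_eq0 (negPf s_neq0).
Qed.

Lemma card_sqr_inv_nonsquare :
  ~ (exists s, s ^+ 2 = d) -> #|[set t : F | d * t ^+ 2 == 1]| = 0%N.
Proof.
move=> d_nonsq; apply: eq_card0 => t; rewrite inE; apply/negP => /eqP dt.
have t_neq0 : t != 0 by apply: contra_eq_neq dt => ->; rewrite expr0n mulr0 eq_sym oner_eq0.
case: d_nonsq; exists t^-1; rewrite exprVn; apply: (mulIf (expf_neq0 2 t_neq0)).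
by rewrite mulVf ?expf_neq0 // dt.
Qed.

End NormForm.

Section LargeCharacteristic.
Variables (R : idomainType) (p : nat).
Hypotheses (chR : p \in [pchar R]) (p_gt5 : (5 < p)%N).

Lemma natr_neq0_pchar_gt5 k : (0 < k <= 5)%N -> (k%:R : R) != 0.
Proof.
case/andP=> k_gt0 k_le5; rewrite -(dvdn_pcharf chR) gtnNdvd //.
exact: leq_ltn_trans k_le5 p_gt5.
Qed.

Lemma natr45_neq0_pchar_gt5 : (45%:R : R) != 0.
Proof.
have -> : 45%:R = 3%:R * 3%:R * 5%:R :> R by rewrite -!natrM.
by rewrite !mulf_neq0 // natr_neq0_pchar_gt5.
Qed.

End LargeCharacteristic.

Fixpoint lucasU (R : pzRingType) (k : nat) : R :=
  match k with
  | 0%N => 0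
  | 1%N => 1
  | (k'.+1 as k1).+1 => 7%:R * lucasU R k1 - lucasU R k'
  end.

Lemma lucasU0 (R : pzRingType) : lucasU R 0 = 0. Proof. by []. Qed.
Lemma lucasU1 (R : pzRingType) : lucasU R 1 = 1. Proof. by []. Qed.
Lemma lucasUSS (R : pzRingType) k :
  lucasU R k.+2 = 7%:R * lucasU R k.+1 - lucasU R k.
Proof. by []. Qed.
Arguments lucasU : simpl never.

Lemma lucasU_int (R : pzRingType) k : lucasU R k = (lucasU int k)%:~R.
Proof.
suff: lucasU R k = (lucasU int k)%:~R /\ lucasU R k.+1 = (lucasU int k.+1)%:~R.
  by case.
elim: k => [|k [IHk IHk1]]; first by split.
by split=> //; rewrite !lucasUSS intrB intrM IHk IHk1.
Qed.

(* The norm of [w - u * lambda] for a root [lambda] of [X^2 - 7 X + 1]. *)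
Definition norm7 (R : pzRingType) (u w : R) : R := u ^+ 2 - 7%:R * u * w + w ^+ 2.

Lemma norm7_lucasU (R : comPzRingType) k : norm7 (lucasU R k.+1) (lucasU R k) = 1.
Proof.
elim: k => [|k IHk]; first by rewrite /norm7 lucasU1 lucasU0; ring.
by rewrite -[RHS]IHk /norm7 lucasUSS; ring.
Qed.

Lemma expr_lucasU (R : comPzRingType) (mu : R) :
  mu ^+ 2 = 7%:R * mu - 1 -> forall k, mu ^+ k.+1 = lucasU R k.+1 * mu - lucasU R k.
Proof.
move=> mu_root; elim=> [|k IHk]; first by rewrite lucasU1 lucasU0; ring.
rewrite exprS IHk lucasUSS.
transitivity (lucasU R k.+1 * mu ^+ 2 - lucasU R k * mu); first ring.
by rewrite mu_root; ring.
Qed.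

(* [lucas_cycle R k] says that [X ^+ k.+1 = 1] modulo [X^2 - 7 X + 1]. *)
Definition lucas_cycle (R : pzRingType) (k : nat) : bool :=
  (lucasU R k.+1 == 0) && (lucasU R k + 1 == 0).

Lemma lucas_cycle_pchar (R : nzRingType) (p : nat) : p \in [pchar R] ->
  forall k, lucas_cycle R k = (p %| lucasU int k.+1)%Z && (p %| lucasU int k + 1)%Z.
Proof.
by move=> chR k; rewrite !(dvdz_pcharf chR) intrD -!lucasU_int.
Qed.

Section LucasField.
Variable F : fieldType.
Hypotheses (two_neq0 : (2%:R : F) != 0) (disc_neq0 : (45%:R : F) != 0).

Lemma norm7_lucas_cycle k :
  norm7 (lucasU F k.+1) (lucasU F k + 1) = 0 -> lucas_cycle F k.
Proof.
set u := lucasU F k.+1; set w := lucasU F k + 1 => Nuw0.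
have lin : 2%:R * w - 7%:R * u = 0.
  transitivity (norm7 u w - norm7 u (lucasU F k) + 1); first by rewrite /norm7 /w; ring.
  by rewrite Nuw0 norm7_lucasU; ring.
have u0 : u = 0.
  have : 45%:R * u ^+ 2 = (2%:R * w - 7%:R * u) ^+ 2 - 4%:R * norm7 u w.
    by rewrite /norm7; ring.
  rewrite lin Nuw0 expr0n /= mulr0 subr0 => /eqP.
  by rewrite mulf_eq0 (negPf disc_neq0) expf_eq0 /= => /eqP.
move: lin; rewrite u0 mulr0 subr0 => /eqP.
by rewrite /lucas_cycle -/u -/w u0 mulf_eq0 (negPf two_neq0) eqxx.
Qed.

Lemma expr_lucas_cycle (mu : F) : mu ^+ 2 = 7%:R * mu - 1 ->
  forall k, (mu ^+ k.+1 == 1) = lucas_cycle F k.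
Proof.
move=> mu_root k; rewrite expr_lucasU //; apply/eqP/idP => [mu_k1|].
  apply: norm7_lucas_cycle.
  have w_eq : lucasU F k + 1 = lucasU F k.+1 * mu by rewrite -mu_k1; ring.
  rewrite w_eq; transitivity (lucasU F k.+1 ^+ 2 * (mu ^+ 2 - (7%:R * mu - 1))).
    by rewrite /norm7; ring.
  by rewrite mu_root subrr mulr0.
case/andP=> /eqP -> /eqP w0.
by rewrite -[lucasU F k](addrK 1) w0; ring.
Qed.

Lemma lambda_root (r : F) : r ^+ 2 = 5%:R ->
  ((7%:R + 3%:R * r) / 2%:R) ^+ 2 = 7%:R * ((7%:R + 3%:R * r) / 2%:R) - 1.
Proof.
move=> r_sqrt5; apply/eqP; rewrite -subr_eq0; apply/eqP.
transitivity (9%:R / 4%:R * (r ^+ 2 - 5%:R)); last by rewrite r_sqrt5 subrr mulr0.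
by field; rewrite -[4%:R]/(2 * 2)%:R natrM mulf_neq0.
Qed.

End LucasField.

Section Rotation.
Variable p : nat.
Hypotheses (p_pr : prime p) (p_gt5 : (5 < p)%N).
Local Notation F := 'F_p.
Local Notation rot := (@m1 p \o @m2 p).

Lemma iter_rot k (x : trip p) : iter k.+1 rot x =
  (lucasU F k.+1 * (8%:R * x.1.1 - 3%:R * x.1.2) - lucasU F k * x.1.1,
   lucasU F k.+1 * (3%:R * x.1.1 - x.1.2) - lucasU F k * x.1.2, x.2).
Proof.
case: x => [[x1 x2] x3]; elim: k => [|k IHk].
  by rewrite /= /m1 /m2 /= lucasU1 lucasU0; congr (_, _, _); ring.
by rewrite iterS IHk /= /m1 /m2 /= lucasUSS; congr (_, _, _); ring.
Qed.

Lemma iter_rot_cycle (x : trip p) k :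
  x.1 != (0, 0) -> (iter k.+1 rot x == x) = lucas_cycle F k.
Proof.
have chF := pchar_Fp p_pr.
case: x => [[x1 x2] x3] x_neq0; rewrite iter_rot /= /lucas_cycle.
set u := lucasU F k.+1; set w := lucasU F k + 1.
have cycleP : norm7 u w = 0 -> (u == 0) && (w == 0) :=
  norm7_lucas_cycle (natr_neq0_pchar_gt5 chF p_gt5 (isT : (0 < 2 <= 5)%N))
    (natr45_neq0_pchar_gt5 chF p_gt5) (k := k).
have -> : lucasU F k = w - 1 by rewrite /w addrK.
apply/eqP/idP => [[e1 e2]|/andP[/eqP u0 /eqP w0]]; last first.
  by rewrite u0 w0; congr (_, _, _); ring.
apply: cycleP.
(* [norm7 u w] is the determinant of [u A - w], with [A] the matrix of [rot] on [(x1, x2)];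
   the two combinations below are the rows of its adjugate applied to [x]. *)
have Nx1 : norm7 u w * x1 = 0.
  transitivity ((- u - w) * (u * (8%:R * x1 - 3%:R * x2) - (w - 1) * x1 - x1)
      + 3%:R * u * (u * (3%:R * x1 - x2) - (w - 1) * x2 - x2)); first by rewrite /norm7; ring.
  by rewrite e1 e2 !subrr !mulr0 addr0.
have Nx2 : norm7 u w * x2 = 0.
  transitivity ((8%:R * u - w) * (u * (3%:R * x1 - x2) - (w - 1) * x2 - x2)
      - 3%:R * u * (u * (8%:R * x1 - 3%:R * x2) - (w - 1) * x1 - x1)); first by rewrite /norm7; ring.
  by rewrite e1 e2 !subrr !mulr0 subrr.
apply/eqP; apply: contraNT x_neq0 => N_neq0.
move/eqP: Nx1; move/eqP: Nx2; rewrite !mulf_eq0 (negPf N_neq0) /= => /eqP -> /eqP ->.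
by [].
Qed.

Variables (L : finFieldType) (r : L) (n : nat).
Hypotheses (chL : p \in [pchar L]) (r_sqrt5 : r ^+ 2 = 5%:R).
Hypothesis lambda_ord : n.-primitive_root ((7%:R + 3%:R * r) / 2%:R).

Local Notation lambda := ((7%:R + 3%:R * r) / 2%:R).

Lemma iter_rot_period (x : trip p) k : x.1 != (0, 0) -> (iter k rot x == x) = (n %| k)%N.
Proof.
move=> x_neq0; case: k => [|k]; first by rewrite eqxx dvdn0.
have two_neq0 := natr_neq0_pchar_gt5 chL p_gt5 (isT : (0 < 2 <= 5)%N).
have lambda_cycle := expr_lucas_cycle two_neq0 (natr45_neq0_pchar_gt5 chL p_gt5)
  (lambda_root two_neq0 r_sqrt5).
rewrite iter_rot_cycle // (lucas_cycle_pchar (pchar_Fp p_pr)) -(lucas_cycle_pchar chL).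
by rewrite -lambda_cycle -(expr0 lambda) (eq_prim_root_expr lambda_ord) mod0n.
Qed.

End Rotation.

Section Solutions.
Variable p : nat.
Hypotheses (p_pr : prime p) (p_gt5 : (5 < p)%N).
Local Notation F := 'F_p.

Let chF : p \in [pchar F] := pchar_Fp p_pr.
Let two_neq0 : (2%:R : F) != 0 := natr_neq0_pchar_gt5 chF p_gt5 (isT : (0 < 2 <= 5)%N).
Let four_neq0 : (4%:R : F) != 0 := natr_neq0_pchar_gt5 chF p_gt5 (isT : (0 < 4 <= 5)%N).
Let five_neq0 : (5%:R : F) != 0 := natr_neq0_pchar_gt5 chF p_gt5 (isT : (0 < 5 <= 5)%N).

Lemma m1K : involutive (@m1 p).
Proof. by case=> [[x1 x2] x3]; rewrite /m1 /=; congr (_, _, _); ring. Qed.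

Lemma m2K : involutive (@m2 p).
Proof. by case=> [[x1 x2] x3]; rewrite /m2 /=; congr (_, _, _); ring. Qed.

Lemma eqn_m1 (x : trip p) : eqn (m1 x) = eqn x.
Proof. by case: x => [[x1 x2] x3]; rewrite /eqn /m1 /=; ring. Qed.

Lemma eqn_m2 (x : trip p) : eqn (m2 x) = eqn x.
Proof. by case: x => [[x1 x2] x3]; rewrite /eqn /m2 /=; ring. Qed.

Definition sols_at (c : F) : {set trip p} := [set x : trip p | (eqn x == 0) && (x.2 == c)].

(* Completing the square: [(2 x1 - 3 x2)^2 - 5 x2^2 = 4 (x1^2 - 3 x1 x2 + x2^2)]. *)
Definition sol_of_norm (c : F) (z : F * F) : trip p := (((z.1 + 3%:R * z.2) / 2%:R, z.2), c).

Lemma sol_of_norm_inj c : injective (sol_of_norm c).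
Proof.
move=> [u1 v1] [u2 v2] e; have /= v12 := congr1 (fun x => x.1.2) e.
have /= := congr1 (fun x => x.1.1) e; rewrite -{}v12 => /(mulIf (invr_neq0 two_neq0)).
by move/addIr->.
Qed.

Lemma sols_atE c : sols_at c = sol_of_norm c @: normfib 5%:R (- (4%:R * c ^+ 2)).
Proof.
apply/setP => x; rewrite inE; apply/andP/imsetP => [[/eqP x_sol /eqP x3c]|[z + ->]].
  exists (2%:R * x.1.1 - 3%:R * x.1.2, x.1.2).
    rewrite inE /normf /=; apply/eqP.
    transitivity (4%:R * (eqn x - x.2 ^+ 2)); first by rewrite /eqn; ring.
    by rewrite x_sol x3c; ring.
  by case: x x3c {x_sol} => [[x1 x2] x3] /= ->; rewrite /sol_of_norm /=; congr (_, _, _); field.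
rewrite inE => /eqP z_norm; split=> //=; apply/eqP.
transitivity (normf 5%:R z / 4%:R + c ^+ 2).
  by rewrite /eqn /normf /=; field; rewrite four_neq0 two_neq0.
by rewrite z_norm; field.
Qed.

Lemma card_sols_at c : #|sols_at c| = #|normfib 5%:R (- (4%:R * c ^+ 2))|.
Proof. by rewrite sols_atE card_imset //; apply: sol_of_norm_inj. Qed.

Lemma card_sols1 : #|sols1 p| = #|normfib (5%:R : F) 1|.
Proof.
rewrite -[sols1 p]/(sols_at 1) card_sols_at expr1n mulr1.
by rewrite (card_normfib_unit two_neq0 five_neq0) // oppr_eq0.
Qed.

Lemma sols0E : sols0 p = sols_at 0 :\ (0, 0, 0).
Proof. by apply/setP => x; rewrite !inE [RHS]andbC andbA. Qed.

Lemma card_sols0 : #|sols0 p| = (#|normfib (5%:R : F) 0%R| - 1)%N.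
Proof.
have zero_sol : ((0, 0, 0) : trip p) \in sols_at 0.
  by rewrite !inE /eqn /= expr0n !mulr0 !addr0 subr0 eqxx.
have := card_sols_at 0; rewrite expr0n mulr0 oppr0 => <-.
by rewrite sols0E (cardsD1 (0, 0, 0) (sols_at 0)) zero_sol add1n subn1.
Qed.

Lemma m1_fixed_sols_at c : [set x in sols_at c | m1 x == x] =
  [set ((3%:R * t, 2%:R * t), c) | t in [set t : F | 5%:R * t ^+ 2 == c ^+ 2]].
Proof.
apply/setP => x; rewrite !inE; apply/idP/imsetP => [|[t + ->]].
  case: x => [[x1 x2] x3] /andP[/andP[/eqP x_sol /= /eqP x3c] /eqP x_fixed].
  have x1E : x1 = 3%:R * (x2 / 2%:R).
    have /= x_fix1 := congr1 (fun x => x.1.1) x_fixed.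
    apply/eqP; rewrite -subr_eq0; apply/eqP.
    transitivity ((x1 - (- x1 + 3%:R * x2)) / 2%:R); first by field.
    by rewrite x_fix1 subrr mul0r.
  exists (x2 / 2%:R); last by rewrite x1E x3c; congr (_, _, _); field.
  by rewrite inE; apply/eqP; rewrite -[RHS]subr0 -x_sol x1E x3c /eqn /=; field; exact: two_neq0.
rewrite inE => /eqP t5 /=; rewrite eqxx andbT; apply/andP; split; apply/eqP.
  by transitivity (c ^+ 2 - 5%:R * t ^+ 2); [rewrite /eqn /=; ring | rewrite t5 subrr].
by rewrite /m1 /=; congr (_, _, _); ring.
Qed.

Lemma card_m1_fixed_sols_at c :
  #|[set x in sols_at c | m1 x == x]| = #|[set t : F | 5%:R * t ^+ 2 == c ^+ 2]|.
Proof.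
rewrite m1_fixed_sols_at card_imset // => t1 t2 /(congr1 (fun x => x.1.2)) /=.
by move/(mulfI two_neq0).
Qed.

Lemma m1_fixed_sols0 : [set x in sols0 p | m1 x == x] = set0.
Proof.
apply/setP => x; rewrite in_set0 sols0E !inE; apply/negP.
move=> /andP[/andP[x_neq0 x_sol] x_fixed].
have : x \in [set x in sols_at 0 | m1 x == x] by rewrite !inE x_sol x_fixed.
rewrite m1_fixed_sols_at => /imsetP[t]; rewrite inE expr0n mulf_eq0 (negPf five_neq0).
by rewrite expf_eq0 /= => /eqP-> x0; rewrite x0 !mulr0 eqxx in x_neq0.
Qed.

Definition swap12 (x : trip p) : trip p := ((x.1.2, x.1.1), x.2).

Lemma swap12K : involutive swap12. Proof. by case=> [[]]. Qed.

Lemma m2_swap12 x : m2 x = swap12 (m1 (swap12 x)). Proof. by case: x => [[]]. Qed.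

Lemma eqn_swap12 x : eqn (swap12 x) = eqn x.
Proof. by case: x => [[x1 x2] x3]; rewrite /eqn /=; ring. Qed.

Lemma card_m2_fixed (S : {set trip p}) : {homo swap12 : x / x \in S} ->
  #|[set x in S | m2 x == x]| = #|[set x in S | m1 x == x]|.
Proof.
move=> swapS; rewrite -(card_imset _ (can_inj swap12K)) (can2_imset_pre _ swap12K swap12K).
apply: eq_card => x; rewrite !inE m2_swap12 (inv_eq swap12K); congr (_ && _).
by apply/idP/idP => [/swapS|/swapS]; rewrite ?swap12K.
Qed.

Lemma sols_at_m1 c : {homo @m1 p : x / x \in sols_at c}.
Proof. by move=> x; rewrite !inE eqn_m1. Qed.

Lemma sols_at_m2 c : {homo @m2 p : x / x \in sols_at c}.
Proof. by move=> x; rewrite !inE eqn_m2. Qed.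

Lemma sols_at_swap12 c : {homo swap12 : x / x \in sols_at c}.
Proof. by move=> x; rewrite !inE eqn_swap12. Qed.

Lemma sols0_m1 : {homo @m1 p : x / x \in sols0 p}.
Proof.
rewrite sols0E; apply: homo_setD1 (@m1K) _ (sols_at_m1 (c := 0)).
by rewrite /m1 /= mulr0 oppr0 addr0.
Qed.

Lemma sols0_m2 : {homo @m2 p : x / x \in sols0 p}.
Proof.
rewrite sols0E; apply: homo_setD1 (@m2K) _ (sols_at_m2 (c := 0)).
by rewrite /m2 /= mulr0 oppr0 addr0.
Qed.

Lemma sols0_swap12 : {homo swap12 : x / x \in sols0 p}.
Proof. by rewrite sols0E; apply: homo_setD1 swap12K _ (sols_at_swap12 (c := 0)). Qed.

Lemma sols1_neq0 x : x \in sols1 p -> x.1 != (0, 0).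
Proof.
case: x => [[x1 x2] x3]; rewrite !inE /= => /andP[x_sol /eqP x3_1].
apply: contraTneq x_sol => -[-> ->].
by rewrite /eqn /= x3_1 expr0n expr1n !mulr0 !add0r subr0 oner_eq0.
Qed.

Lemma sols0_neq0 x : x \in sols0 p -> x.1 != (0, 0).
Proof.
case: x => [[x1 x2] x3]; rewrite !inE /= => /and3P[_ /eqP-> x_neq0].
by apply: contra_neq x_neq0 => -[-> ->].
Qed.

Lemma card_sols1_square (s : F) : s ^+ 2 = 5%:R -> #|sols1 p| = (p - 1)%N.
Proof.
by move=> s5; rewrite card_sols1 (card_normfib1_square two_neq0 five_neq0 s5) (card_Fp p_pr).
Qed.

Lemma card_sols1_nonsquare : ~ (exists s : F, s ^+ 2 = 5%:R) -> #|sols1 p| = p.+1.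
Proof.
move=> nonsq; rewrite card_sols1 (card_normfib1_nonsquare two_neq0 five_neq0 nonsq).
by rewrite (card_Fp p_pr).
Qed.

Lemma card_sols0_square (s : F) : s ^+ 2 = 5%:R -> #|sols0 p| = (2 * (p - 1))%N.
Proof.
move=> s5; rewrite card_sols0 (card_normfib0_square two_neq0 five_neq0 s5) (card_Fp p_pr).
by have := prime_gt1 p_pr; lia.
Qed.

Lemma sols0_nonsquare : ~ (exists s : F, s ^+ 2 = 5%:R) -> sols0 p = set0.
Proof.
move=> nonsq; apply/eqP; rewrite -cards_eq0 card_sols0.
by rewrite (card_normfib0_nonsquare nonsq).
Qed.

Lemma card_m1_fixed_sols1_square (s : F) :
  s ^+ 2 = 5%:R -> #|[set x in sols1 p | m1 x == x]| = 2%N.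
Proof.
move=> s5; rewrite -[sols1 p]/(sols_at 1) card_m1_fixed_sols_at expr1n.
exact: (card_sqr_inv_square two_neq0 five_neq0 s5).
Qed.

Lemma card_m1_fixed_sols1_nonsquare :
  ~ (exists s : F, s ^+ 2 = 5%:R) -> #|[set x in sols1 p | m1 x == x]| = 0%N.
Proof.
move=> nonsq; rewrite -[sols1 p]/(sols_at 1) card_m1_fixed_sols_at expr1n.
exact: card_sqr_inv_nonsquare nonsq.
Qed.

End Solutions.

Section OrbitCount.
Variables (p : nat) (L : finFieldType) (r : L) (n : nat).
Hypotheses (p_pr : prime p) (p_gt5 : (5 < p)%N) (chL : p \in [pchar L]).
Hypotheses (r_sqrt5 : r ^+ 2 = 5%:R) (lambda_ord : n.-primitive_root ((7%:R + 3%:R * r) / 2%:R)).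

Lemma card_orbits (S : {set trip p}) :
  {homo @m1 p : x / x \in S} -> {homo @m2 p : x / x \in S} -> {homo @swap12 p : x / x \in S} ->
  {in S, forall x, x.1 != (0, 0)} ->
  (#|orbits S| * (4 * n) = 2 * #|S| + 2 * n * #|[set x in S | m1 x == x]|)%N.
Proof.
move=> m1S m2S swapS S_neq0.
have period : {in S, forall x k, (iter k (@m1 p \o @m2 p) x == x) = (n %| k)%N}.
  move=> x /S_neq0 x_neq0 k.
  exact: (iter_rot_period p_pr p_gt5 chL r_sqrt5 lambda_ord k x_neq0).
(* The rewrite below matches [#|orbits S|] only after unfolding [orbits] and [step]. *)
have := card_dihedral_orbits (@m1K p) (@m2K p) m1S m2S (prim_order_gt0 lambda_ord) period.
by move=> ->; rewrite (card_m2_fixed swapS) addnn -mul2n mulnCA mulnA.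
Qed.

End OrbitCount.

Theorem proposition5p1 (p : nat) (p_pr : prime p) (p_gt5 : (5 < p)%N)
  (L : finFieldType) (charL : p \in [pchar L]) (cardL : #|L| = (p ^ 2)%N)
  (r : L) (hr : r ^+ 2 = 5%:R)
  (n : nat) (ord_lambda : n.-primitive_root ((7%:R + 3%:R * r) / 2%:R)) :
  ((exists s : 'F_p, s ^+ 2 = 5%:R) ->
     (#|orbits (sols1 p)|%:R : rat) = 1 / 2 * ((p - 1)%:R / n%:R) + 1
     /\ (#|orbits (sols0 p)|%:R : rat) = (p - 1)%:R / n%:R)
  /\
  (~ (exists s : 'F_p, s ^+ 2 = 5%:R) ->
     (#|orbits (sols1 p)|%:R : rat) = 1 / 2 * ((p + 1)%:R / n%:R)
     /\ #|orbits (sols0 p)| = 0%N).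
Proof.
have orbits1 := card_orbits p_pr p_gt5 charL hr ord_lambda (S := sols1 p)
  (sols_at_m1 (c := 1)) (sols_at_m2 (c := 1)) (sols_at_swap12 (c := 1)) (@sols1_neq0 p).
have orbits0 := card_orbits p_pr p_gt5 charL hr ord_lambda
  (@sols0_m1 p) (@sols0_m2 p) (@sols0_swap12 p) (@sols0_neq0 p).
rewrite (m1_fixed_sols0 p_pr p_gt5) cards0 muln0 addn0 in orbits0.
have n_gt0 : (0 < n%:R :> rat) by rewrite ltr0n (prim_order_gt0 ord_lambda).
have ratE k m : (k * (4 * n))%N = m -> (k%:R : rat) = m%:R / (4 * n)%:R.
  by move=> <-; rewrite natrM mulfK // natrM mulf_neq0 // lt0r_neq0.
split=> [[s s5]|nonsq].
  rewrite (ratE _ _ orbits1) (ratE _ _ orbits0) (card_sols1_square p_pr p_gt5 s5).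
  rewrite (card_m1_fixed_sols1_square p_pr p_gt5 s5) (card_sols0_square p_pr p_gt5 s5).
  by split; rewrite !(natrD, natrM); field; rewrite lt0r_neq0.
rewrite (ratE _ _ orbits1) (card_sols1_nonsquare p_pr p_gt5 nonsq).
rewrite (card_m1_fixed_sols1_nonsquare p_pr p_gt5 nonsq) (sols0_nonsquare p_pr p_gt5 nonsq).
split; last by rewrite /orbits imset0 cards0.
by rewrite muln0 addn0 natrM -addn1 natrD; field; rewrite lt0r_neq0.
Qed.
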